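(* Let $(E,\mu)$ and $(F,\nu)$ be fuzzy Riesz spaces and let $T:E\rightarrow F$ be a fuzzy Riesz homomorphism, with kernel $\mathrm{Ker}(T)=\{x\in E: Tx=0\}$. Then: (1) For $x\in E$: $\nu(0,Tx)>\frac12$ if and only if there exists $z\in \mathrm{Ker}(T)$ with $\mu(0,z)>\frac12$ and $\mu(0,x+z)>\frac12$. Consequently, for $x,y\in E$: $\nu(Ty,Tx)>\frac12$ if and only if there exists $w\in E$ with $\mu(x,w)>\frac12$, $\mu(y,w)>\frac12$ and $Tw=Tx$. (2) For $x,y\in E$: $\nu(|Tx|,|Ty|)>\frac12$ if and only if there exists $w\in \mathrm{Ker}(T)$ with $\mu(|w|,|x|)>\frac12$ and $\mu(|x-w|,|y|)>\frac12$.
   Context: A fuzzy order on a real vector space $E$ is a map $\mu:E\times E\to[0,1]$ with $\mu(x,x)=1$ for all $x$; $\mu(x,y)+\mu(y,x)>1$ implies $x=y$; and $\mu(x,z)\ge\sup_{y\in E}\min(\mu(x,y),\mu(y,z))$. Write $x\le y$ for $\mu(x,y)>\frac12$. For $A\subseteq E$, $y$ is an upper bound of $A$ if $x\le y$ for all $x\in A$; $z=\sup A$ if $z$ is an upper bound of $A$ and $z\le y$ for every upper bound $y$ of $A$; lower bounds and $\inf$ are defined dually. $(E,\mu)$ is a fuzzy ordered linear space if $\mu(x_1,x_2)>\frac12$ implies $\mu(x_1,x_2)\le\mu(x_1+x,x_2+x)$ for all $x\in E$ and $\mu(x_1,x_2)\le\mu(\alpha x_1,\alpha x_2)$ for all real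 $\alpha>0$. It is a fuzzy Riesz space if in addition $x\vee y=\sup\{x,y\}$ and $x\wedge y=\inf\{x,y\}$ exist for all $x,y$. Put $x^+=x\vee 0$, $x^-=(-x)\vee0$, $|x|=x\vee(-x)$. A fuzzy Riesz homomorphism between fuzzy Riesz spaces is a linear map $T$ with $T(x\vee y)=Tx\vee Ty$ for all $x,y$. *)

From HB Require Import structures.
From mathcomp Require Import all_boot all_order all_algebra.
From mathcomp Require Import reals.
Set Implicit Arguments. Unset Strict Implicit. Unset Printing Implicit Defensive.
Import Order.TTheory GRing.Theory Num.Theory.
Local Open Scope ring_scope.

Section FuzzyRiesz.
Variables (R : realType) (E : lmodType R).
Implicit Types (mu : E -> E -> R) (A : E -> Prop).

(* fuzzy order: values in [0,1], reflexive, antisymmetric, (sup-min) transitive.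
   "mu x z >= sup_y min (mu x y) (mu y z)" is written out as: mu x z is an
   upper bound of all the min (mu x y) (mu y z) (the sup exists since all
   values lie in [0,1]). *)
Definition fuzzy_order mu : Prop :=
  [/\ (forall x y, 0 <= mu x y <= 1),
      (forall x, mu x x = 1),
      (forall x y, 1 < mu x y + mu y x -> x = y) &
      (forall x y z, Num.min (mu x y) (mu y z) <= mu x z)].

Definition fle mu x y : Prop := 1 / 2 < mu x y.

Definition is_upper mu A y : Prop := forall x, A x -> fle mu x y.
Definition is_lower mu A y : Prop := forall x, A x -> fle mu y x.
Definition is_sup mu A z : Prop :=
  is_upper mu A z /\ forall y, is_upper mu A y -> fle mu z y.
Definition is_inf mu A z : Prop :=
  is_lower mu A z /\ forall y, is_lower mu A y -> fle mu y z.

Definition pair_set (x y : E) : E -> Prop := fun t => t = x \/ t = y.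

Definition fuzzy_ordered_linear mu : Prop :=
  fuzzy_order mu /\
  forall x1 x2, fle mu x1 x2 ->
    (forall x, mu x1 x2 <= mu (x1 + x) (x2 + x)) /\
    (forall a : R, 0 < a -> mu x1 x2 <= mu (a *: x1) (a *: x2)).

Definition fuzzy_riesz mu (join meet : E -> E -> E) : Prop :=
  [/\ fuzzy_ordered_linear mu,
      (forall x y, is_sup mu (pair_set x y) (join x y)) &
      (forall x y, is_inf mu (pair_set x y) (meet x y))].

Definition fpos (join : E -> E -> E) x := join x 0.
Definition fneg (join : E -> E -> E) x := join (- x) 0.
Definition fabs (join : E -> E -> E) x := join x (- x).

End FuzzyRiesz.

Definition fuzzy_riesz_hom (R : realType) (E F : lmodType R)
  (joinE : E -> E -> E) (joinF : F -> F -> F) (T : {linear E -> F}) : Prop :=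
  forall x y, T (joinE x y) = joinF (T x) (T y).

From mathcomp Require Import all_boot all_order all_algebra.
From mathcomp Require Import reals.
From mathcomp Require Import lra.
Import Order.TTheory GRing.Theory Num.Theory.
Local Open Scope ring_scope.
Set Implicit Arguments. Unset Strict Implicit.

(* A Riesz homomorphism preserves joins, hence the order, the meets
   (x /\ y = x + y - x \/ y) and the absolute values; every "if" direction is
   the monotonicity of T.  For the converses one exhibits witnesses: the
   negative part of x in (1), x \/ y for the second claim, and in (2)
   w = x - c, where c = (x /\ |y|) \/ (-|y|) is x clipped to [-|y|, |y|].
   Since -|Ty| <= Tx <= |Ty|, the clipping is invisible after T, so Tc = Tx;
   and clipping gives |c| <= |y| and |x - c| <= |x|. *)

Section FuzzyOrderedSpace.
Variables (R : realType) (E : lmodType R) (mu : E -> E -> R).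
Hypothesis hmu : fuzzy_ordered_linear mu.

Lemma fle_refl x : fle mu x x.
Proof. by case: hmu => -[_ mu1 _ _] _; rewrite /fle mu1; lra. Qed.

Lemma fle_trans y x z : fle mu x y -> fle mu y z -> fle mu x z.
Proof.
case: hmu => -[_ _ _ muT] _ xy yz.
by apply: lt_le_trans (muT x y z); rewrite lt_min xy yz.
Qed.

Lemma fle_anti x y : fle mu x y -> fle mu y x -> x = y.
Proof. by case: hmu => -[_ _ muA _] _ xy yx; apply: muA; rewrite /fle in xy yx; lra. Qed.

Lemma fle_add2r z x y : fle mu (x + z) (y + z) <-> fle mu x y.
Proof.
have addr z' x' y' : fle mu x' y' -> fle mu (x' + z') (y' + z').
  by case: hmu => _ muD xy; apply: lt_le_trans xy ((muD _ _ xy).1 z').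
by split=> [/(addr (- z)) | /addr]; rewrite ?addrK.
Qed.

Lemma fle_add2l z x y : fle mu (z + x) (z + y) <-> fle mu x y.
Proof. by rewrite ![z + _]addrC fle_add2r. Qed.

Lemma fle_subl_addr x y z : fle mu (x - y) z <-> fle mu x (z + y).
Proof. by rewrite -(fle_add2r y) subrK. Qed.

Lemma fle_subr_addr x y z : fle mu x (y - z) <-> fle mu (x + z) y.
Proof. by rewrite -(fle_add2r z) subrK. Qed.

Lemma fle_opp x y : fle mu (- x) (- y) <-> fle mu y x.
Proof. by rewrite -(fle_add2r (x + y)) addKr [x + y]addrC addKr. Qed.

Lemma fle_opp_le0 x : fle mu (- x) 0 <-> fle mu 0 x.
Proof. by rewrite -fle_opp opprK oppr0. Qed.

Lemma fle_addl x c : fle mu x (x + c) <-> fle mu 0 c.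
Proof. by rewrite -{1}[x]addr0 fle_add2l. Qed.

Lemma fle_add x1 y1 x2 y2 :
  fle mu x1 y1 -> fle mu x2 y2 -> fle mu (x1 + x2) (y1 + y2).
Proof.
move=> h1 h2; apply: (fle_trans (y := y1 + x2)).
  by rewrite fle_add2r.
by rewrite fle_add2l.
Qed.

Lemma fle_scale (c : R) x y : 0 < c -> fle mu x y -> fle mu (c *: x) (c *: y).
Proof. by case: hmu => _ muD c0 xy; apply: lt_le_trans xy ((muD _ _ xy).2 c c0). Qed.

Section Lattice.
Variables join meet : E -> E -> E.
Hypotheses (hjoin : forall x y, is_sup mu (pair_set x y) (join x y))
           (hmeet : forall x y, is_inf mu (pair_set x y) (meet x y)).

Lemma fle_joinl x y : fle mu x (join x y).
Proof. by case: (hjoin x y) => + _; apply; left. Qed.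

Lemma fle_joinr x y : fle mu y (join x y).
Proof. by case: (hjoin x y) => + _; apply; right. Qed.

Lemma fle_join_lub x y z : fle mu x z -> fle mu y z -> fle mu (join x y) z.
Proof. by move=> xz yz; case: (hjoin x y) => _; apply=> t [->|->]. Qed.

Lemma join_l x y : fle mu y x -> join x y = x.
Proof.
by move=> yx; apply: fle_anti; [apply: fle_join_lub (fle_refl x) yx | apply: fle_joinl].
Qed.

Lemma join_r x y : fle mu x y -> join x y = y.
Proof.
by move=> xy; apply: fle_anti; [apply: fle_join_lub xy (fle_refl y) | apply: fle_joinr].
Qed.

Lemma fle_meetl x y : fle mu (meet x y) x.
Proof. by case: (hmeet x y) => + _; apply; left. Qed.

Lemma fle_meetr x y : fle mu (meet x y) y.
Proof. by case: (hmeet x y) => + _; apply; right. Qed.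

Lemma fle_meet_glb z x y : fle mu z x -> fle mu z y -> fle mu z (meet x y).
Proof. by move=> zx zy; case: (hmeet x y) => _; apply=> t [->|->]. Qed.

Lemma meet_l x y : fle mu x y -> meet x y = x.
Proof.
by move=> xy; apply: fle_anti; [apply: fle_meetl | apply: fle_meet_glb (fle_refl x) xy].
Qed.

Lemma meet_addB x y : meet x y = x + y - join x y.
Proof.
apply: fle_anti.
  rewrite fle_subr_addr addrC -fle_subr_addr; apply: fle_join_lub.
    by rewrite fle_subr_addr fle_add2l; apply: fle_meetr.
  by rewrite fle_subr_addr [x + y]addrC fle_add2l; apply: fle_meetl.
apply: fle_meet_glb; rewrite fle_subl_addr.
  by rewrite fle_add2l; apply: fle_joinr.
by rewrite [x + y]addrC fle_add2l; apply: fle_joinl.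
Qed.

Lemma fle_fabs x : fle mu x (fabs join x).
Proof. exact: fle_joinl. Qed.

Lemma fle_fabsN x : fle mu (- x) (fabs join x).
Proof. exact: fle_joinr. Qed.

Lemma fabs_ge0 x : fle mu 0 (fabs join x).
Proof.
have := fle_scale (c := 1 / 2) _ (fle_add (fle_fabs x) (fle_fabsN x)).
by rewrite subrr scaler0 scalerDr -scalerDl -splitr scale1r; apply; lra.
Qed.

Lemma fle_fabsl x a : fle mu (fabs join x) a <-> fle mu (- a) x /\ fle mu x a.
Proof.
split=> [xa | [ax xa]].
  by split; [rewrite -[x]opprK fle_opp; apply: fle_trans (fle_fabsN x) xa
            | apply: fle_trans (fle_fabs x) xa].
by apply: fle_join_lub => //; rewrite -fle_opp opprK.
Qed.

Lemma fneg_eq0 x : fle mu 0 x -> fneg join x = 0.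
Proof. by move=> x0; apply: join_r; rewrite fle_opp_le0. Qed.

Lemma fle0_addfneg x : fle mu 0 (x + fneg join x).
Proof. by rewrite -(addrN x) fle_add2l; apply: fle_joinl. Qed.

Definition fclip a x := join (meet x a) (- a).

Lemma fclip_id a x : fle mu (- a) x -> fle mu x a -> fclip a x = x.
Proof. by move=> ax xa; rewrite /fclip meet_l // join_l. Qed.

Lemma fle_fabs_fclip a x : fle mu 0 a -> fle mu (fabs join (fclip a x)) a.
Proof.
move=> a0; apply/fle_fabsl; split; first exact: fle_joinr.
apply: fle_join_lub; first exact: fle_meetr.
by apply: (fle_trans (y := 0)); rewrite ?fle_opp_le0.
Qed.

Lemma fle_fabs_subfclip a x :
  fle mu 0 a -> fle mu (fabs join (x - fclip a x)) (fabs join x).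
Proof.
move=> a0; have x0 := fabs_ge0 x.
have clip_le : fle mu (fclip a x) (x + fabs join x).
  apply: fle_join_lub; first by apply: fle_trans (fle_meetl x a) _; rewrite fle_addl.
  apply: (fle_trans (y := 0)); first by rewrite fle_opp_le0.
  by rewrite -(addrN x) fle_add2l; apply: fle_fabsN.
have clip_ge : fle mu (x - fabs join x) (fclip a x).
  apply: fle_trans (fle_joinl _ _); apply: fle_meet_glb.
    by rewrite fle_subl_addr fle_addl.
  by apply: fle_trans a0; rewrite fle_subl_addr add0r; apply: fle_fabs.
apply/fle_fabsl; split.
  by rewrite fle_subr_addr addrC fle_subl_addr.
by rewrite fle_subl_addr addrC -fle_subl_addr.
Qed.

End Lattice.
End FuzzyOrderedSpace.

Section RieszHomomorphism.
Variables (R : realType) (E F : lmodType R).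
Variables (mu : E -> E -> R) (joinE meetE : E -> E -> E).
Variables (nu : F -> F -> R) (joinF meetF : F -> F -> F).
Hypotheses (hE : fuzzy_riesz mu joinE meetE) (hF : fuzzy_riesz nu joinF meetF).
Variable T : {linear E -> F}.
Hypothesis hT : fuzzy_riesz_hom joinE joinF T.

Let hmuE : fuzzy_ordered_linear mu. Proof. by case: hE. Qed.
Let hjoinE x y : is_sup mu (pair_set x y) (joinE x y). Proof. by case: hE. Qed.
Let hmeetE x y : is_inf mu (pair_set x y) (meetE x y). Proof. by case: hE. Qed.
Let hmuF : fuzzy_ordered_linear nu. Proof. by case: hF. Qed.
Let hjoinF x y : is_sup nu (pair_set x y) (joinF x y). Proof. by case: hF. Qed.
Let hmeetF x y : is_inf nu (pair_set x y) (meetF x y). Proof. by case: hF. Qed.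

Lemma fle_riesz_hom x y : fle mu x y -> fle nu (T x) (T y).
Proof. by move=> xy; rewrite -(join_r hmuE hjoinE xy) hT; apply: fle_joinl. Qed.

Lemma riesz_hom_fneg x : T (fneg joinE x) = fneg joinF (T x).
Proof. by rewrite /fneg hT linearN linear0. Qed.

Lemma riesz_hom_fabs x : T (fabs joinE x) = fabs joinF (T x).
Proof. by rewrite /fabs hT linearN. Qed.

Lemma riesz_hom_meet x y : T (meetE x y) = meetF (T x) (T y).
Proof.
rewrite (meet_addB hmuE hjoinE hmeetE) (meet_addB hmuF hjoinF hmeetF).
by rewrite linearB linearD hT.
Qed.

Lemma riesz_hom_fclip a x : T (fclip joinE meetE a x) = fclip joinF meetF (T a) (T x).
Proof. by rewrite /fclip hT riesz_hom_meet linearN. Qed.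

Lemma riesz_hom_ge0P x :
  fle nu 0 (T x) <-> exists z, [/\ T z = 0, fle mu 0 z & fle mu 0 (x + z)].
Proof.
split=> [Tx0 | [z [Tz0 _ xz0]]].
  exists (fneg joinE x); split; last exact: fle0_addfneg.
    by rewrite riesz_hom_fneg (fneg_eq0 hmuF).
  exact: fle_joinr.
by have := fle_riesz_hom xz0; rewrite linear0 linearD Tz0 addr0.
Qed.

Lemma riesz_hom_leP x y :
  fle nu (T y) (T x) <-> exists w, [/\ fle mu x w, fle mu y w & T w = T x].
Proof.
split=> [Tyx | [w [_ yw <-]]]; last exact: fle_riesz_hom.
exists (joinE x y); split; [exact: fle_joinl | exact: fle_joinr |].
by rewrite hT (join_l hmuF).
Qed.

Lemma riesz_hom_fabs_leP x y :
  fle nu (fabs joinF (T x)) (fabs joinF (T y)) <->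
  exists w, [/\ T w = 0, fle mu (fabs joinE w) (fabs joinE x)
                       & fle mu (fabs joinE (x - w)) (fabs joinE y)].
Proof.
split=> [Txy | [w [Tw0 _ xwy]]]; last first.
  by have := fle_riesz_hom xwy; rewrite !riesz_hom_fabs linearB Tw0 subr0.
set a := fabs joinE y.
have a0 : fle mu 0 a by apply: fabs_ge0.
have [aTx Txa] : fle nu (- T a) (T x) /\ fle nu (T x) (T a).
  by apply/(fle_fabsl hmuF hjoinF); rewrite /a riesz_hom_fabs.
exists (x - fclip joinE meetE a x); rewrite subKr; split.
- by rewrite linearB riesz_hom_fclip (fclip_id hmuF) ?subrr.
- exact: fle_fabs_subfclip.
- exact: fle_fabs_fclip.
Qed.

End RieszHomomorphism.

Theorem theorem2p2 (R : realType) (E F : lmodType R)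
  (mu : E -> E -> R) (joinE meetE : E -> E -> E)
  (nu : F -> F -> R) (joinF meetF : F -> F -> F)
  (hE : fuzzy_riesz mu joinE meetE) (hF : fuzzy_riesz nu joinF meetF)
  (T : {linear E -> F}) (hT : fuzzy_riesz_hom joinE joinF T) :
  ((forall x : E,
      1 / 2 < nu 0 (T x) <->
      exists z : E, [/\ T z = 0, 1 / 2 < mu 0 z & 1 / 2 < mu 0 (x + z)]) /\
   (forall x y : E,
      1 / 2 < nu (T y) (T x) <->
      exists w : E, [/\ 1 / 2 < mu x w, 1 / 2 < mu y w & T w = T x])) /\
  (forall x y : E,
      1 / 2 < nu (fabs joinF (T x)) (fabs joinF (T y)) <->
      exists w : E, [/\ T w = 0,
        1 / 2 < mu (fabs joinE w) (fabs joinE x) &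
        1 / 2 < mu (fabs joinE (x - w)) (fabs joinE y)]).
Proof.
split; first split.
- exact (riesz_hom_ge0P hE hF hT).
- exact (riesz_hom_leP hE hF hT).
- exact (riesz_hom_fabs_leP hE hF hT).
Qed.
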